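(* The set of points of exact period $4$ under $G$ lies on the curve \[ u^{2}(-v^{2}+v)+u(v^{3}-v^{2}-v+1)+v^{3}+v^{2}=0, \] and the Zariski closure in $\mathbb{C}^2$ of this set is this curve (this is the equation of period four orbits on the $(u,v)$-plane).
   Context: Let \[ G(u,v)=\left(\frac{-u+v+uv}{u},\ \frac{u^{2}-u+v-u^{2}v-uv+uv^{2}+v^{2}}{u}\right), \] defined for $(u,v)\in\mathbb{C}^2$ with $u\neq 0$. A point $(u,v)$ has exact period $n$ under $G$ if the iterates $G^k(u,v)$, $0\le k\le n-1$, all have nonzero first coordinate, $G^n(u,v)=(u,v)$, and $G^k(u,v)\neq(u,v)$ for $0<k<n$. *)

From HB Require Import structures.
From mathcomp Require Import all_boot all_order all_algebra.
From mathcomp Require Import reals complex.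
Set Implicit Arguments. Unset Strict Implicit. Unset Printing Implicit Defensive.
Import Order.TTheory GRing.Theory Num.Theory.
Local Open Scope ring_scope.

Section Defs.
Variable R : realType.
Local Notation C := (R[i]).

(* The map G, written with field division (u = 0 gives a junk value,
   but the period definition requires nonzero first coordinates). *)
Definition Gmap (p : C * C) : C * C :=
  let: (u, v) := p in
  ((- u + v + u * v) / u,
   (u ^+ 2 - u + v - u ^+ 2 * v - u * v + u * v ^+ 2 + v ^+ 2) / u).

Definition exact_period (n : nat) (p : C * C) : Prop :=
  (forall k, (k < n)%N -> (iter k Gmap p).1 != 0) /\
  iter n Gmap p = p /\
  (forall k, (0 < k < n)%N -> iter k Gmap p != p).

Definition period4_poly (u v : C) : C :=
  u ^+ 2 * (- v ^+ 2 + v) + u * (v ^+ 3 - v ^+ 2 - v + 1) + v ^+ 3 + v ^+ 2.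

Definition period4_curve (p : C * C) : Prop := period4_poly p.1 p.2 = 0.

(* evaluation of a bivariate polynomial f(u,v) in {poly {poly C}}:
   inner variable u, outer variable v *)
Definition eval2 (f : {poly {poly C}}) (p : C * C) : C :=
  (f.[p.2%:P]).[p.1].

Definition zariski_closure (S : C * C -> Prop) (p : C * C) : Prop :=
  forall f : {poly {poly C}}, (forall q, S q -> eval2 f q = 0) -> eval2 f p = 0.
End Defs.

From HB Require Import structures.
From mathcomp Require Import all_boot all_order all_algebra.
From mathcomp Require Import reals complex.
From mathcomp Require Import separable ring.
Set Implicit Arguments. Unset Strict Implicit. Unset Printing Implicit Defensive.
Import Order.TTheory GRing.Theory Num.Theory.
Local Open Scope ring_scope.

(* In the chart (u, s) |-> (u, u (1 + s)), defined off u = 0, the map G becomes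
   the polynomial map F (u, s) = (u + s + u s, u s), and the quartic pulls back
   to u Q(u, s).  One computes F^4 - id = Q s (h, h - 2 (u + 1)) for an explicit
   h; since s = 0 consists of fixed points and u = -1 of points of period 2,
   every point of exact period 4 satisfies Q = 0, and conversely every point of
   Q = 0 with (u + 1)(u^2 + 1) != 0 has exact period 4.
   For the closure, pseudo-divide f by P, a cubic in v with leading coefficient
   u + 1.  Off finitely many u the fibre of P consists of three distinct points
   of exact period 4, which kills the remainder, and the power of u + 1 cancels
   because P(-1, v) is not identically zero. *)

Section PolyVanishing.
Variable D : numDomainType.

Lemma poly_eq0_off_root (p q : {poly D}) :
  q != 0 -> (forall x, q.[x] != 0 -> p.[x] = 0) -> p = 0.
Proof.
move=> q_neq0 p_off.
suff /eqP : p * q = 0 by rewrite mulf_eq0 (negbTE q_neq0) orbF => /eqP.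
apply: (@roots_geq_poly_eq0 _ _ [seq i%:R | i <- iota 0 (size (p * q))]).
- apply/allP => x _; rewrite /root hornerM.
  by have [->|/p_off ->] := eqVneq q.[x] 0; rewrite ?mulr0 ?mul0r.
- by rewrite map_inj_uniq ?iota_uniq // => m n /eqP; rewrite eqr_nat => /eqP.
- by rewrite size_map size_iota.
Qed.

Lemma bipoly_eq0_off_root (r : {poly {poly D}}) (q : {poly D}) :
  q != 0 -> (forall x, q.[x] != 0 -> map_poly (horner_eval x) r = 0) -> r = 0.
Proof.
move=> q_neq0 r_off; apply/polyP => i; rewrite coef0.
apply: (poly_eq0_off_root q_neq0) => x /r_off /(congr1 (coefp i)).
by rewrite /= coef_map coef0.
Qed.

End PolyVanishing.

Lemma XsubC_exp_scale_cancel (F : fieldType) (a : F) (d g q : {poly {poly F}}) k :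
  map_poly (horner_eval a) d != 0 ->
  ('X - a%:P) ^+ k *: g = q * d -> exists q', g = q' * d.
Proof.
move=> da_neq0; elim: k g q => [|k IH] g q; first by rewrite expr0 scale1r => ->; exists q.
set c := 'X - a%:P => Dq.
have qa0 : map_poly (horner_eval a) q = 0.
  have /eqP := congr1 (map_poly (horner_eval a)) Dq.
  rewrite -mul_polyC !rmorphM /= map_polyC /= horner_evalE horner_exp hornerXsubC.
  by rewrite subrr expr0n mul0r eq_sym mulf_eq0 (negbTE da_neq0) orbF => /eqP.
have c_dvd i : c %| q`_i.
  by rewrite dvdp_XsubCl /root -horner_evalE -coef_map qa0 coef0.
pose q1 := map_poly (fun p => p %/ c) q.
have Dq1 : q = c%:P * q1.
  by apply/polyP => i; rewrite coefCM coef_map_id0 ?div0p // mulrC divpK.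
apply: (IH g q1); apply: (@mulfI _ c%:P); first by rewrite polyC_eq0 polyXsubC_eq0.
by rewrite mulrA -Dq1 -Dq mul_polyC scalerA -exprS.
Qed.

Section Dynamics.
Variable R : realType.
Local Notation C := R[i].
Local Notation G := (@Gmap R).
Implicit Types (x y : C * C) (u v s : C).

Definition chart x : C * C := (x.1, x.1 * (1 + x.2)).

Definition Fmap x : C * C := (x.1 + x.2 + x.1 * x.2, x.1 * x.2).

Lemma chart_inj x y : x.1 != 0 -> chart x = chart y -> x = y.
Proof.
by case: x y => [u s] [u' s'] /= u_neq0 [<-] /(mulfI u_neq0)/addrI ->.
Qed.

Lemma chart_inv u v : u != 0 -> chart (u, v / u - 1) = (u, v).
Proof. by move=> u_neq0; rewrite /chart /= addrC subrK mulrC divfK. Qed.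

Lemma Gmap_chart x : x.1 != 0 -> G (chart x) = chart (Fmap x).
Proof. by case: x => u s /= u_neq0; rewrite /Gmap /chart /Fmap /=; congr pair; field. Qed.

Lemma Fmap_eq x : (Fmap x == x) = (x.2 == 0).
Proof.
case: x => u s /=; apply/eqP/eqP => [[e1 e2] | ->]; last first.
  by rewrite /Fmap /= mulr0 !addr0.
have /eqP : 2 * s = 0.
  have -> : 2 * s = (u + s + u * s - u) + (s - u * s) by ring.
  by rewrite e1 e2 !subrr addr0.
by rewrite mulf_eq0 pnatr_eq0 => /eqP.
Qed.

Definition orbit_nonzero (f : C * C -> C * C) n x :=
  forall j, (j < n)%N -> (iter j f x).1 != 0.

Lemma orbit_nonzeroS f n x :
  orbit_nonzero f n.+1 x <-> orbit_nonzero f n x /\ (iter n f x).1 != 0.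
Proof.
split=> [nz | [nz nz_n] j]; first by split=> [j /ltnW|]; apply: nz.
by rewrite ltnS leq_eqVlt => /predU1P [->|/nz].
Qed.

Lemma iter_Gmap_chart n x :
  orbit_nonzero Fmap n x -> iter n G (chart x) = chart (iter n Fmap x).
Proof.
elim: n => [//|n IH] /orbit_nonzeroS [nz nz_n] /=.
by rewrite IH ?Gmap_chart.
Qed.

Lemma orbit_nonzero_chart n x :
  orbit_nonzero G n (chart x) <-> orbit_nonzero Fmap n x.
Proof.
elim: n => [|n IH]; first by split=> _ j.
rewrite !orbit_nonzeroS IH; split=> -[nz nz_n]; split=> //.
  by rewrite iter_Gmap_chart in nz_n.
by rewrite iter_Gmap_chart.
Qed.

Lemma exact_period_chart n x : (0 < n)%N ->
  exact_period n (chart x) <->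
  [/\ orbit_nonzero Fmap n x, iter n Fmap x = x
    & forall k, (0 < k < n)%N -> iter k Fmap x != x].
Proof.
move=> n_gt0; rewrite /exact_period -/(orbit_nonzero G n (chart x)).
rewrite orbit_nonzero_chart.
suff chartE k : orbit_nonzero Fmap n x -> (k <= n)%N ->
    (iter k G (chart x) == chart x) = (iter k Fmap x == x).
  split=> [[nz [per aper]] | [nz per aper]].
    split=> // [|k /andP[k_gt0 k_lt]]; first by apply/eqP; rewrite -chartE // per.
    by rewrite -chartE ?aper ?k_gt0 // ltnW.
  split=> //; split=> [|k /andP[k_gt0 k_lt]]; first by apply/eqP; rewrite chartE // per.
  by rewrite chartE ?aper ?k_gt0 // ltnW.
move=> nz k_le; have x1_neq0 : x.1 != 0 := nz 0%N n_gt0.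
rewrite iter_Gmap_chart => [|j j_lt]; last exact/nz/(leq_trans j_lt).
apply/eqP/eqP => [/esym/(chart_inj x1_neq0) //|->] //.
Qed.

Definition period4_chart_poly u s : C :=
  u ^+ 3 * (1 + s) ^+ 2 * s + u ^+ 2 * (1 + s) * (s ^+ 2 + s + 1) + u * (1 + s) * s + 1.

Lemma period4_poly_chart u s :
  period4_poly u (u * (1 + s)) = u * period4_chart_poly u s.
Proof. by rewrite /period4_poly /period4_chart_poly; ring. Qed.

Lemma iter4_Fmap_sub u s : exists h,
  (iter 4 Fmap (u, s)).1 - u = period4_chart_poly u s * s * h /\
  (iter 4 Fmap (u, s)).2 - s = period4_chart_poly u s * s * (h - 2 * (u + 1)).
Proof.
exists (1 + 2 * u + u * s + u ^+ 2 + u * s ^+ 2 + 2 * u ^+ 2 * s + u * s ^+ 3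
  + 4 * u ^+ 2 * s ^+ 2 + 2 * u ^+ 3 * s + 4 * u ^+ 2 * s ^+ 3
  + 6 * u ^+ 3 * s ^+ 2 + u ^+ 4 * s + u ^+ 2 * s ^+ 4 + 7 * u ^+ 3 * s ^+ 3
  + 4 * u ^+ 4 * s ^+ 2 + 3 * u ^+ 3 * s ^+ 4 + 6 * u ^+ 4 * s ^+ 3
  + u ^+ 5 * s ^+ 2 + 3 * u ^+ 4 * s ^+ 4 + 2 * u ^+ 5 * s ^+ 3 + u ^+ 5 * s ^+ 4).
by rewrite /= /Fmap /period4_chart_poly /=; split; ring.
Qed.

Lemma iter4_Fmap_fixed u s :
  period4_chart_poly u s = 0 -> iter 4 Fmap (u, s) = (u, s).
Proof.
have [h] := iter4_Fmap_sub u s; move=> + Q0; rewrite Q0 !mul0r.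
by case: (iter 4 Fmap (u, s)) => u' s' /= [/subr0_eq -> /subr0_eq ->].
Qed.

Lemma period4_chart_poly_eq0 u s : u + 1 != 0 -> s != 0 ->
  iter 4 Fmap (u, s) = (u, s) -> period4_chart_poly u s = 0.
Proof.
move=> u1_neq0 s_neq0 per; have [h] := iter4_Fmap_sub u s.
rewrite per !subrr => -[/esym e1 /esym e2].
set Q := period4_chart_poly u s in e1 e2 *.
have /eqP : Q * s * (2 * (u + 1)) = 0.
  have -> : Q * s * (2 * (u + 1)) = Q * s * h - Q * s * (h - 2 * (u + 1)) by ring.
  by rewrite e1 e2 subr0.
by rewrite !mulf_eq0 pnatr_eq0 (negbTE s_neq0) (negbTE u1_neq0) !orbF => /eqP.
Qed.

(* A zero first coordinate sends the orbit to the fixed point (x.2, 0), and a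
   periodic orbit through a fixed point is that point, here (0, 0). *)
Lemma orbit_nonzero_Fmap u s :
  period4_chart_poly u s = 0 -> orbit_nonzero Fmap 4 (u, s).
Proof.
move=> Q0 j j_lt; apply/eqP => zj.
have fixed_next : Fmap (iter j.+1 Fmap (u, s)) = iter j.+1 Fmap (u, s).
  by apply/eqP; rewrite Fmap_eq iterS /= zj mul0r.
have x_fixed : Fmap (u, s) = (u, s).
  have back : iter j.+1 Fmap (u, s) = (u, s).
    by rewrite -{2}(iter4_Fmap_fixed Q0) -(subnK j_lt) iterD (iter_fix _ fixed_next).
  by rewrite -{1}back fixed_next back.
move/eqP: (x_fixed); rewrite Fmap_eq /= => /eqP s0.
rewrite iter_fix //= in zj.
move: Q0; rewrite zj s0 /period4_chart_poly.
by rewrite !(expr0n, mul0r, mulr0, add0r) => /eqP; rewrite oner_eq0.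
Qed.

Lemma exact_period4_chart_eq0 u s :
  exact_period 4 (chart (u, s)) -> period4_chart_poly u s = 0.
Proof.
case/exact_period_chart => // _ per aper.
apply: period4_chart_poly_eq0 per.
  apply: contra_neq (aper 2%N isT) => /eqP; rewrite addr_eq0 => /eqP ->.
  by rewrite /Fmap /=; congr pair; ring.
by apply: contra_neq (aper 1%N isT) => s0; apply/eqP; rewrite Fmap_eq s0.
Qed.

Lemma exact_period4_chart u s : u + 1 != 0 -> u ^+ 2 + 1 != 0 ->
  period4_chart_poly u s = 0 -> exact_period 4 (chart (u, s)).
Proof.
move=> u1_neq0 u2_neq0 Q0; have per := iter4_Fmap_fixed Q0.
have not_fixed : Fmap (u, s) != (u, s).
  rewrite Fmap_eq /=; apply: contra_neq u2_neq0 => s0.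
  by move: Q0; rewrite s0 /period4_chart_poly => <-; ring.
apply/exact_period_chart => //; split=> // [|[|[|[|[|k]]]] //= _].
- exact: orbit_nonzero_Fmap.
- apply/eqP => per2.
  have cert : period4_chart_poly u s * (2 + s + 2 * u + 2 * u * s + u ^+ 2 * s)
      - (1 + 2 * u + 2 * u * s + 3 * u ^+ 2 + u * s ^+ 2 + 3 * u ^+ 2 * s
         + 2 * u ^+ 2 * s ^+ 2 + u ^+ 3 * s + u ^+ 3 * s ^+ 2)
        * ((Fmap (Fmap (u, s))).1 - u) = 2 * (u + 1) * (u ^+ 2 + 1).
    by rewrite /Fmap /period4_chart_poly /=; ring.
  move/eqP: cert; rewrite per2 Q0 subrr mul0r mulr0 subr0 eq_sym.
  by rewrite !mulf_eq0 pnatr_eq0 (negbTE u1_neq0) (negbTE u2_neq0).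
- by apply: contra_neq not_fixed => per3; rewrite -{1}per3.
Qed.

Lemma exact_period4_on_curve (p : C * C) : exact_period 4 p -> period4_curve p.
Proof.
case: p => u v per; have u_neq0 : u != 0 := per.1 0%N isT.
rewrite -(chart_inv v u_neq0) in per *.
by rewrite /period4_curve /= period4_poly_chart (exact_period4_chart_eq0 per) mulr0.
Qed.

Lemma exact_period4_of_curve u v : u * (u + 1) * (u ^+ 2 + 1) != 0 ->
  period4_poly u v = 0 -> exact_period 4 (u, v).
Proof.
rewrite !mulf_eq0 !negb_or => /andP[/andP[u_neq0 u1_neq0] u2_neq0] Puv.
rewrite -(chart_inv v u_neq0); apply: exact_period4_chart => //.
have := period4_poly_chart u (v / u - 1).
rewrite [u * _](congr1 snd (chart_inv v u_neq0)) Puv => /esym/eqP.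
by rewrite mulf_eq0 (negbTE u_neq0) => /eqP.
Qed.
End Dynamics.

Section ZariskiClosure.
Variable R : realType.
Local Notation C := R[i].
Local Notation fiber u f := (map_poly (horner_eval u) f).

Definition period4_bipoly : {poly {poly C}} :=
  Poly [:: 'X; 'X ^+ 2 - 'X; - 'X ^+ 2 - 'X + 1; 'X + 1].

(* The discriminant of period4_poly as a cubic in v. *)
Definition period4_disc : {poly C} := Poly [:: 0; -4; -32; -36; -15; -16; -2; 0; 1].

Definition period4_exceptional : {poly C} :=
  'X * ('X + 1) * ('X ^+ 2 + 1) * period4_disc.

Lemma eval2E (f : {poly {poly C}}) u v : eval2 f (u, v) = (fiber u f).[v].
Proof. by rewrite /eval2 -[in RHS](hornerC v u) -horner_evalE horner_map. Qed.

Lemma eval2D (f g : {poly {poly C}}) p : eval2 (f + g) p = eval2 f p + eval2 g p.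
Proof. by rewrite /eval2 !hornerD. Qed.

Lemma eval2M (f g : {poly {poly C}}) p : eval2 (f * g) p = eval2 f p * eval2 g p.
Proof. by rewrite /eval2 !hornerM. Qed.

Lemma eval2Z (c : {poly C}) (f : {poly {poly C}}) p :
  eval2 (c *: f) p = c.[p.1] * eval2 f p.
Proof. by rewrite /eval2 hornerZ hornerM. Qed.

Lemma eval2_period4_bipoly u v : eval2 period4_bipoly (u, v) = period4_poly u v.
Proof.
rewrite /eval2 /period4_bipoly; cbn [Poly].
rewrite !(horner_cons, hornerD, hornerN, hornerM, hornerC, hornerX, hornerXn, horner_exp) /=.
by rewrite /period4_poly; ring.
Qed.

Lemma Xadd1_neq0 : 'X + 1 != 0 :> {poly C}.
Proof. by rewrite -size_poly_eq0 size_XaddC. Qed.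

Lemma period4_bipolyE :
  polyseq period4_bipoly = [:: 'X; 'X ^+ 2 - 'X; - 'X ^+ 2 - 'X + 1; 'X + 1].
Proof. by rewrite /period4_bipoly (@PolyK _ 0) //= Xadd1_neq0. Qed.

Lemma size_period4_bipoly : size period4_bipoly = 4.
Proof. by rewrite period4_bipolyE. Qed.

Lemma lead_coef_period4_bipoly : lead_coef period4_bipoly = 'X + 1.
Proof. by rewrite lead_coefE size_period4_bipoly period4_bipolyE. Qed.

Lemma eval2_deriv_period4_bipoly u v : eval2 period4_bipoly^`() (u, v) =
  2 * v + 3 * v ^+ 2 - u - 2 * u * v + 3 * u * v ^+ 2 + u ^+ 2 - 2 * u ^+ 2 * v.
Proof.
rewrite /deriv size_period4_bipoly /eval2 horner_poly.
rewrite !big_ord_recr big_ord0 /= period4_bipolyE; cbn [nth].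
rewrite !(hornerD, hornerN, hornerM, hornerC, hornerX, hornerXn, horner_exp, hornerMn) /=.
by ring.
Qed.

Lemma period4_disc_eq0 u v : eval2 period4_bipoly (u, v) = 0 ->
  eval2 period4_bipoly^`() (u, v) = 0 -> (u + 1) * period4_disc.[u] = 0.
Proof.
rewrite eval2_period4_bipoly eval2_deriv_period4_bipoly => P0 dP0.
(* Res_v(P, dP/dv) = - (u + 1) disc, written as a combination of P and dP/dv. *)
have cert : (4 + 14 * v + 30 * u + 12 * v ^+ 2 + 6 * u * v + 75 * u ^+ 2
    + 6 * u * v ^+ 2 + 4 * u ^+ 2 * v + 56 * u ^+ 3 - 12 * u ^+ 2 * v ^+ 2
    - 4 * u ^+ 3 * v + 30 * u ^+ 4 - 6 * u ^+ 3 * v ^+ 2 - 4 * u ^+ 4 * v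
    + 16 * u ^+ 5 + 6 * u ^+ 4 * v ^+ 2 + 2 * u ^+ 5 * v + u ^+ 6
    + 6 * u ^+ 5 * v ^+ 2 + 2 * u ^+ 6 * v - 4 * u ^+ 7) * period4_poly u v
  + (- 2 * v - 6 * u - 6 * v ^+ 2 - 8 * u * v + u ^+ 2 - 4 * v ^+ 3
    - 27 * u ^+ 2 * v + 6 * u ^+ 3 - 2 * u * v ^+ 3 - 16 * u ^+ 3 * v
    + 5 * u ^+ 4 + 4 * u ^+ 2 * v ^+ 3 - 10 * u ^+ 4 * v + 3 * u ^+ 5
    + 2 * u ^+ 3 * v ^+ 3 - 6 * u ^+ 5 * v + 2 * u ^+ 6 - 2 * u ^+ 4 * v ^+ 3
    - u ^+ 6 * v - u ^+ 7 - 2 * u ^+ 5 * v ^+ 3 + 2 * u ^+ 7 * v)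
    * (2 * v + 3 * v ^+ 2 - u - 2 * u * v + 3 * u * v ^+ 2 + u ^+ 2 - 2 * u ^+ 2 * v)
    = - ((u + 1) * period4_disc.[u]).
  rewrite /period4_disc; cbn [Poly]; rewrite !(horner_cons, hornerC) /period4_poly.
  by ring.
by apply/eqP; rewrite -oppr_eq0 -cert P0 dP0 !mulr0 addr0.
Qed.

Lemma period4_exceptional_neq0 : period4_exceptional != 0.
Proof.
have : period4_exceptional.[1] = -416.
  rewrite /period4_exceptional /period4_disc; cbn [Poly].
  rewrite !(hornerM, hornerD, hornerX, hornerC, hornerXn, horner_cons).
  by ring.
by apply: contra_eq_neq => ->; rewrite horner0 eq_sym oppr_eq0 pnatr_eq0.
Qed.

Lemma period4_fiber_roots u : period4_exceptional.[u] != 0 -> exists rs,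
  [/\ uniq rs, size rs = 3 & forall z, z \in rs -> exact_period 4 (u, z)].
Proof.
rewrite !(hornerM, hornerD, hornerX, hornerC, hornerXn) mulf_eq0 negb_or.
case/andP=> u_generic disc_neq0.
have u1_neq0 : u + 1 != 0 by move: u_generic; rewrite !mulf_eq0 !negb_or => /andP[/andP[]].
set p := fiber u period4_bipoly.
have lc_p : horner_eval u (lead_coef period4_bipoly) = u + 1.
  by rewrite lead_coef_period4_bipoly horner_evalE hornerD hornerX hornerC.
have [rs Drs] : exists rs : seq C, p = lead_coef p *: \prod_(z <- rs) ('X - z%:P).
  by have [rs ?] := closed_field_poly_normal p; exists rs.
rewrite lead_coef_map_id0 ?rmorph0 ?lc_p // in Drs.
exists rs; split.
- rewrite -separable_prod_XsubC -(eqp_separable (eqp_scale _ u1_neq0)) -Drs.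
  rewrite unlock; apply: Pdiv.ClosedField.root_coprimep => z /eqP pz.
  rewrite deriv_map -eval2E.
  apply: contra_neq (mulf_neq0 u1_neq0 disc_neq0) => dz.
  by apply: (period4_disc_eq0 (v := z)); rewrite // eval2E.
- have := congr1 (fun q : {poly C} => size q) Drs.
  by rewrite size_scale // size_prod_XsubC size_map_poly_id0 ?lc_p // size_period4_bipoly => -[].
- move=> z z_rs; apply: exact_period4_of_curve u_generic _.
  have : root p z by rewrite Drs rootZ // root_prod_XsubC.
  by rewrite -eval2_period4_bipoly eval2E => /eqP.
Qed.

Lemma period4_fiber_eq0 (r : {poly {poly C}}) u : (size r <= 3)%N ->
  period4_exceptional.[u] != 0 ->
  (forall p, exact_period 4 p -> eval2 r p = 0) -> fiber u r = 0.
Proof.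
move=> size_r exc r0; have [rs [rs_uniq size_rs rs_per]] := period4_fiber_roots exc.
apply: (roots_geq_poly_eq0 (rs := rs)) => //.
- by apply/allP => z /rs_per /r0; rewrite eval2E => /eqP.
- by rewrite size_rs (leq_trans (size_poly _ _)).
Qed.

Lemma vanishing_on_period4_curve (f : {poly {poly C}}) :
  (forall p, exact_period 4 p -> eval2 f p = 0) ->
  forall u v, period4_poly u v = 0 -> eval2 f (u, v) = 0.
Proof.
move=> f0 u v Puv.
have := Pdiv.Idomain.divp_eq f period4_bipoly; rewrite lead_coef_period4_bipoly.
set q := _ %/ _; set r := _ %% _ => Df.
have r0 : r = 0.
  apply: (bipoly_eq0_off_root period4_exceptional_neq0) => x exc.
  apply: period4_fiber_eq0 exc _ => [|p per].
    have := Pdiv.Idomain.ltn_modp f period4_bipoly.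
    by rewrite -size_poly_eq0 size_period4_bipoly ltnS.
  have d0 : eval2 period4_bipoly p = 0.
    by case: p per => u' v' /exact_period4_on_curve; rewrite eval2_period4_bipoly.
  have := congr1 (fun g => eval2 g p) Df.
  by rewrite /= eval2Z eval2D eval2M f0 // d0 !mulr0 add0r.
have [g ->] : exists g, f = g * period4_bipoly.
  apply: (@XsubC_exp_scale_cancel _ (-1) _ _ q (scalp f period4_bipoly)).
    apply: contra_eq_neq (eval2_period4_bipoly (-1) 0) => fiber0.
    rewrite eval2E fiber0 horner0 /period4_poly.
    by rewrite !(expr0n, oppr0, addr0, subr0, add0r, mulr0, mulr1) eq_sym oppr_eq0 oner_eq0.
  by rewrite polyCN opprK polyC1 -[RHS]addr0 -r0.
by rewrite eval2M eval2_period4_bipoly Puv mulr0.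
Qed.
End ZariskiClosure.

Theorem mainTheorem6 (R : realType) :
  (forall p : R[i] * R[i], exact_period 4 p -> period4_curve p) /\
  (forall p : R[i] * R[i],
     zariski_closure (exact_period 4) p <-> period4_curve p).
Proof.
split=> [|[u v]]; first exact: exact_period4_on_curve.
split=> [in_closure | on_curve f f0]; last exact: vanishing_on_period4_curve.
rewrite /period4_curve /= -eval2_period4_bipoly; apply: in_closure.
by case=> u' v' /exact_period4_on_curve; rewrite eval2_period4_bipoly.
Qed.
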